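(* Let $p>q>1$ be relatively prime integers, let $\mathbf{x}$ be a sequence over a finite alphabet $B$, and let the tree $T(L_{\frac pq})$ be decorated by $\mathbf{x}$. If there exists some $h\ge0$ such that each factor in $F_h^\infty$ can be extended to at most one factor in $F^\infty_{h+1,w_{j,0}}$ for every $0\le j\le q-1$, then $\mathbf{x}$ is $\frac pq$-automatic.
   Context: $A_p=\{0,\ldots,p-1\}$; for $w=w_\ell\cdots w_0\in A_p^*$, $\mathrm{val}_{\frac pq}(w)=\sum_{i=0}^{\ell}\frac{w_i}{q}(\frac pq)^i$; $\mathrm{rep}_{\frac pq}(n)$ is the unique word not starting with $0$ of value $n$ ($\mathrm{rep}_{\frac pq}(0)=\varepsilon$); $L_{\frac pq}=\{\mathrm{rep}_{\frac pq}(n):n\ge0\}$. $\mathbf{x}$ is $\frac pq$-automatic if there is a deterministic finite automaton with output $(Q,q_0,A_p,\delta,\tau:Q\to B)$ with $x_n=\tau(\delta(q_0,\mathrm{rep}_{\frac pq}(n)))$ for all $n$. $T(L_{\frac pq})$ is the tree whose nodes are the words of $L_{\frac pq}$, with an edge labeled $d$ from $w$ to $wd$ whenever both are in $L_{\frac pq}$; node $w$ is decorated by $x_{\mathrm{val}_{\frac pq}(w)}$. For $w\in L_{\frac pq}$, the factor $T[w,h]$ has domain $w^{-1}L_{\frac pq}\cap A_p^{\le h}$ (where $w^{-1}L=\{u:wu\in L\}$), with node $u$ decorated by $x_{\mathrm{val}_{\frac pq}(wu)}$; two factors of the same height are equal if they have the same domain and same decorations. $F_h^\infty$ is the set of factors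 of height $h$ equal to $T[w,h]$ for infinitely many $w$; $F^\infty_{h,a}$ is the set of those in $F_h^\infty$ whose radix-least word of length $h$ in the domain ends with the letter $a$. A factor $U$ of height $h$ is extended to a factor $U'$ of height $h+1$ if the truncation of $U'$ to words of length at most $h$ equals $U$. For $0\le j\le q-1$, $w_j$ is the word listing in increasing order the letters $a\in A_p$ with $a\equiv -pj\pmod q$, and $w_{j,0}$ is its first letter. *)

From mathcomp Require Import all_boot all_order all_algebra.
Set Implicit Arguments. Unset Strict Implicit. Unset Printing Implicit Defensive.
Import Order.TTheory GRing.Theory Num.Theory.

(* Words over A_p = {0,...,p-1} are represented as [seq nat], written
   most significant letter first: the word w_l ... w_0 is [:: w_l; ...; w_0]. *)

Definition valQ (p q : nat) (w : seq nat) : rat :=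
  (\sum_(i < size w)
     ((nth 0%N (rev w) i)%:R / q%:R) * (p%:R / q%:R) ^+ i)%R.

(* natural-number reading of the value (exact for words of L_{p/q}) *)
Definition val_nat (p q : nat) (w : seq nat) : nat := absz (numq (valQ p q w)).

(* rep_{p/q}(n): the standard greedy algorithm  q n = p m + a, a in A_p,
   rep(n) = rep(m) a, rep(0) = epsilon.  Since q < p, m < n for n > 0, so
   fuel n suffices. *)
Fixpoint rep_fuel (p q k n : nat) : seq nat :=
  match k with
  | 0 => [::]
  | k'.+1 => if n == 0 then [::]
             else rcons (rep_fuel p q k' ((q * n) %/ p)) ((q * n) %% p)
  end.

Definition rep (p q n : nat) : seq nat := rep_fuel p q n n.

Definition inL (p q : nat) (w : seq nat) : bool := rep p q (val_nat p q w) == w.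

(* A factor of height h is represented as a map from words to [option B]:
   None outside the domain, Some b for a node decorated by b. *)
Definition factor (B : Type) := seq nat -> option B.

Definition Tfac (B : Type) (p q : nat) (x : nat -> B) (w : seq nat) (h : nat)
  : factor B :=
  fun u => if (size u <= h) && inL p q (w ++ u)
           then Some (x (val_nat p q (w ++ u))) else None.

Definition factor_eq (B : Type) (U V : factor B) : Prop := forall u, U u = V u.

(* U in F_h^infty: U = T[w,h] for infinitely many w in L_{p/q}
   (the words of L are exactly rep n, n : nat, and rep is injective). *)
Definition Finf (B : Type) (p q : nat) (x : nat -> B) (h : nat) (U : factor B)
  : Prop :=
  forall n0 : nat, exists n : nat, (n0 <= n)%N /\ factor_eq U (Tfac p q x (rep p q n) h).

(* radix (= lexicographic, for words of equal length) order *)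
Fixpoint lexle (u v : seq nat) : bool :=
  match u, v with
  | [::], _ => true
  | _ :: _, [::] => false
  | a :: u', b :: v' => (a < b) || ((a == b) && lexle u' v')
  end.

Definition radix_least_h (B : Type) (U : factor B) (h : nat) (u : seq nat) : Prop :=
  size u = h /\ U u <> None /\
  forall v, size v = h -> U v <> None -> lexle u v.

Definition Finf_a (B : Type) (p q : nat) (x : nat -> B) (h a : nat)
  (U : factor B) : Prop :=
  Finf p q x h U /\
  exists u, radix_least_h U h u /\ u <> [::] /\ last 0%N u = a.

Definition extends (B : Type) (h : nat) (U U' : factor B) : Prop :=
  forall u, (size u <= h)%N -> U' u = U u.

Definition wj0 (p q j : nat) : nat :=
  head 0%N [seq a <- iota 0 p | (a + p * j) %% q == 0].

Definition automatic (B : Type) (p q : nat) (x : nat -> B) : Prop :=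
  exists (Q : finType) (q0 : Q) (delta : Q -> nat -> Q) (tau : Q -> B),
    forall n, x n = tau (foldl delta q0 (rep p q n)).

From mathcomp Require Import all_boot all_order all_algebra.
From mathcomp Require Import boolp ring.
Set Implicit Arguments. Unset Strict Implicit. Unset Printing Implicit Defensive.
Import Order.TTheory GRing.Theory Num.Theory.

(* For N large enough, every node w of value > N has its factor T[w,h+1] in
   F_{h+1}^oo, as there are only finitely many factors of height h+1.  If two
   such nodes w, w' have equal factors of height h and a common descendant at
   depth h+1, then val(wu) = val(w'u) mod q for their descendants u at depth h
   (this is where gcd(p,q) = 1 is used), so T[w,h+1] and T[w',h+1] have the
   same domain, hence the same radix-least word of length h+1; its last letter
   is w_{j,0}, with j the residue mod q of the value of its parent, so the
   hypothesis gives T[w,h+1] = T[w',h+1].  Consequently, as letters are read,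
   two such nodes keep equal factors of height h until their subtrees stop
   sharing a word at depth h, and afterwards their factors still agree down
   to the depth where the subtrees separate; in particular their roots carry
   the same letter.  A subset construction over the finitely many tables of
   height h, preceded by an exact count of the values up to N, is then a
   p/q-automaton for x. *)

Lemma lexleE u v : lexle u v = (u <= v :> seqlexi nat)%O.
Proof. by elim: u v => [|a u IH] [|b v] //=; rewrite lexi_cons IH !leEnat; case: ltngtP. Qed.

Lemma lexle_rcons s a b : lexle (rcons s a) (rcons s b) = (a <= b)%N.
Proof. by elim: s => [|c s IH] /=; [case: ltngtP | rewrite ltnn eqxx]. Qed.

Lemma lexle_min (s : seq (seq nat)) : s != [::] ->
  exists2 r, r \in s & forall v, v \in s -> lexle r v.
Proof.
have lexle_total : total lexle by move=> u v; rewrite !lexleE le_total.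
have lexle_trans : transitive lexle by move=> v u w; rewrite !lexleE; apply: le_trans.
case s_sorted: (sort lexle s) => [|r s'] s_neq0.
  by move: s_neq0; rewrite -size_eq0 -(size_sort lexle) s_sorted.
have := sort_sorted lexle_total s; rewrite s_sorted /= => /(order_path_min lexle_trans) r_min.
exists r => [|v]; first by rewrite -(mem_sort lexle) s_sorted mem_head.
rewrite -(mem_sort lexle) s_sorted in_cons => /predU1P[->|/(allP r_min)//].
by rewrite lexleE.
Qed.

Fixpoint words (p k : nat) : seq (seq nat) :=
  if k is k'.+1 then [::] :: [seq a :: u | a <- iota 0 p, u <- words p k']
  else [:: [::]].

Lemma mem_words p k u : (size u <= k)%N -> all (fun a => a < p)%N u -> u \in words p k.
Proof.
elim: k u => [|k IH] [|a u] //= size_u /andP[a_lt u_letters].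
by rewrite in_cons /= (allpairs_f (fun a u => a :: u)) ?mem_iota ?IH.
Qed.

Lemma eventually_recurrent (T : finType) (f : nat -> T) :
  exists N, forall n, (N < n)%N -> forall n0, exists2 m, (n0 <= m)%N & f m = f n.
Proof.
suff [N rec] : exists N, forall n, (N < n)%N -> f n \in enum T ->
    forall n0, exists2 m, (n0 <= m)%N & f m = f n.
  by exists N => n /rec; rewrite mem_enum; apply.
elim: (enum T) => [|t s [N rec]]; first by exists 0.
case: (pselect (forall n0, exists2 m, (n0 <= m)%N & f m = t)) => [t_rec|].
  by exists N => n /rec f_rec; rewrite in_cons => /predU1P[->|] //; apply: f_rec.
move=> /existsNP[n0 t_rare]; exists (maxn N n0) => n.
rewrite gtn_max => /andP[/rec f_rec n0_n].
rewrite in_cons => /predU1P[fn_t|//]; case: t_rare; exists n => //; exact: ltnW.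
Qed.

Lemma head_filter_iota (P : pred nat) a n : (a < n)%N -> P a ->
  (forall b, (b < a)%N -> ~~ P b) -> head 0%N [seq b <- iota 0 n | P b] = a.
Proof.
move=> a_lt Pa below_a; rewrite -(subnKC (ltnW a_lt)) iotaD filter_cat.
have -> : [seq b <- iota 0 a | P b] = [::].
  apply/eqP; rewrite -(negbK (_ == _)) -has_filter.
  by apply/hasPn => b; rewrite mem_iota; apply: below_a.
have : (0 < n - a)%N by rewrite subn_gt0.
by case: (n - a) => [//|k] _ /=; rewrite add0n Pa.
Qed.

Section Numeration.
Variables p q : nat.
Hypothesis q_gt0 : (0 < q)%N.
Hypothesis ltn_qp : (q < p)%N.

Let p_gt0 : (0 < p)%N. Proof. exact: leq_ltn_trans ltn_qp. Qed.

Lemma ltn_parent n : (0 < n)%N -> (q * n %/ p < n)%N.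
Proof. by move=> n_gt0; rewrite ltn_divLR // mulnC ltn_pmul2l. Qed.

Lemma rep_fuel_enough k1 k2 n : (n <= k1)%N -> (n <= k2)%N ->
  rep_fuel p q k1 n = rep_fuel p q k2 n.
Proof.
elim: k1 k2 n => [|k1 IH] [|k2] n /=; rewrite ?leqn0;
  [by [] | by move/eqP-> | by move=> _ /eqP-> |].
move=> nk1 nk2; case: eqP => // /eqP n_neq0.
have lt_n : (q * n %/ p < n)%N by rewrite ltn_parent ?lt0n.
by rewrite (IH k2) // -ltnS (leq_trans lt_n).
Qed.

Lemma repS n : (0 < n)%N ->
  rep p q n = rcons (rep p q (q * n %/ p)) (q * n %% p).
Proof.
case: n => // n n_gt0; rewrite /rep /=.
by congr rcons; apply: rep_fuel_enough => //; rewrite -ltnS ltn_parent.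
Qed.

Lemma valQ_rcons w a :
  valQ p q (rcons w a) = (p%:R / q%:R * valQ p q w + a%:R / q%:R)%R.
Proof.
rewrite /valQ size_rcons big_ord_recl rev_rcons /= expr0 mulr1 addrC mulr_sumr.
by congr (_ + _)%R; apply: eq_bigr => i _; rewrite exprS; ring.
Qed.

Lemma valQ_rep n : valQ p q (rep p q n) = n%:R%R.
Proof.
elim/ltn_ind: n => -[_|n IH]; first by rewrite /valQ big_ord0.
rewrite repS // valQ_rcons IH ?ltn_parent //.
have q_neq0 : (q%:R : rat) != 0%R by rewrite pnatr_eq0 -lt0n.
apply: (mulIf q_neq0); rewrite -natrM (mulnC n.+1) {3}(divn_eq (q * n.+1) p) natrD natrM.
by field.
Qed.

Lemma val_nat_rep n : val_nat p q (rep p q n) = n.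
Proof. by rewrite /val_nat valQ_rep -[n%:R%R]/(((n%:Z)%:Q)%R) numq_int. Qed.

Lemma rep_inj : injective (rep p q).
Proof. by move=> m n e; rewrite -(val_nat_rep m) e val_nat_rep. Qed.

Lemma inLP w : reflect (exists n, w = rep p q n) (inL p q w).
Proof.
by apply: (iffP eqP) => [<-|[n ->]]; [exists (val_nat p q w) | rewrite val_nat_rep].
Qed.

Lemma inL_rep n : inL p q (rep p q n).
Proof. by apply/inLP; exists n. Qed.

Lemma rep_rconsP n a m :
  rcons (rep p q n) a = rep p q m <-> [/\ (0 < m)%N, q * m = p * n + a & (a < p)%N].
Proof.
split=> [|[m_gt0 e a_lt]].
  case: m => [|m]; first by case: (rep p q n).
  rewrite [rep p q m.+1]repS // => /rcons_inj[/rep_inj e ->].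
  by rewrite {1}(divn_eq (q * m.+1) p) e mulnC ltn_mod.
by rewrite (repS m_gt0) e (mulnC p) divnMDl // modnMDl divn_small // modn_small // addn0.
Qed.

Lemma inL_rcons w a : inL p q (rcons w a) -> inL p q w.
Proof.
case/inLP=> -[|m] e; first by case: w e.
by move: e; rewrite repS // => /rcons_inj[-> _]; apply: inL_rep.
Qed.

Lemma inL_rconsP w a : inL p q w ->
  inL p q (rcons w a) <->
  [/\ (a < p)%N, q %| p * val_nat p q w + a & (0 < p * val_nat p q w + a)%N].
Proof.
case/inLP=> n ->; rewrite val_nat_rep; split.
  by case/inLP=> m /rep_rconsP[m_gt0 <- a_lt]; rewrite dvdn_mulr // muln_gt0 q_gt0.
case=> a_lt dvd pos; apply/inLP; exists ((p * n + a) %/ q); apply/rep_rconsP.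
by rewrite [q * _]mulnC divnK // divn_gt0 // dvdn_leq.
Qed.

Lemma val_nat_rcons w a : inL p q (rcons w a) ->
  q * val_nat p q (rcons w a) = p * val_nat p q w + a.
Proof.
move=> wa_in; have /inLP[n w_def] := inL_rcons wa_in.
move: wa_in; rewrite w_def => /inLP[m e].
by rewrite e !val_nat_rep; case/rep_rconsP: e.
Qed.

Lemma val_nat_gt0 w : inL p q w -> w != [::] -> (0 < val_nat p q w)%N.
Proof. by case/inLP=> -[|n] ->; rewrite val_nat_rep. Qed.

Lemma val_nat_rcons_gt w a : inL p q (rcons w a) -> (0 < val_nat p q w)%N ->
  (val_nat p q w < val_nat p q (rcons w a))%N.
Proof.
move=> wa_in pos; rewrite -(ltn_pmul2l q_gt0) val_nat_rcons //.
by rewrite (leq_trans _ (leq_addr _ _)) // ltn_pmul2r.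
Qed.

Lemma letters_inL w : inL p q w -> all (fun a => a < p)%N w.
Proof.
case/inLP=> n ->; elim/ltn_ind: n => -[|n] IH //.
by rewrite repS // all_rcons ltn_mod p_gt0 IH ?ltn_parent.
Qed.

Lemma val_nat_cat_diff w w' u : inL p q (w ++ u) -> inL p q (w' ++ u) ->
  ((q ^ size u)%:Z * ((val_nat p q (w ++ u))%:Z - (val_nat p q (w' ++ u))%:Z)
   = (p ^ size u)%:Z * ((val_nat p q w)%:Z - (val_nat p q w')%:Z))%R.
Proof.
elim/last_ind: u => [|u a IH]; first by rewrite !cats0 !mul1r.
rewrite -!rcons_cat => wua_in w'ua_in.
rewrite size_rcons !expnSr !PoszM -mulrA mulrBr -!PoszM !val_nat_rcons //.
rewrite !PoszD !PoszM [(_ * p%:Z)%R]mulrC -mulrA.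
by rewrite -(IH (inL_rcons wua_in) (inL_rcons w'ua_in)); ring.
Qed.

Hypothesis coprime_pq : coprime p q.

Lemma val_nat_cat_eqmod w w' c u :
  size c = (size u).+1 -> inL p q (w ++ c) -> inL p q (w' ++ c) ->
  inL p q (w ++ u) -> inL p q (w' ++ u) ->
  val_nat p q (w ++ u) = val_nat p q (w' ++ u) %[mod q].
Proof.
move=> size_c wc_in w'c_in wu_in w'u_in.
apply/eqP; rewrite -eqz_nat -!modz_nat eqz_mod_dvd.
have := val_nat_cat_diff wc_in w'c_in; rewrite size_c => diff_c.
have cop : coprimez (q ^ (size u).+1)%:Z (p ^ (size u).+1)%:Z.
  by rewrite coprimezE /= coprimeXl // coprimeXr // coprime_sym.
have : ((q ^ (size u).+1)%:Z
         %| ((p ^ (size u).+1)%:Z * ((val_nat p q w)%:Z - (val_nat p q w')%:Z))%R)%Z.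
  by rewrite -diff_c dvdz_mulr.
rewrite Gauss_dvdzr // => /dvdzP[t et].
have := val_nat_cat_diff wu_in w'u_in; rewrite et expnSr PoszM.
set k := Posz (q ^ size u) => diff_u.
have k_neq0 : k != 0%R by rewrite eqz_nat expn_eq0 negb_and -lt0n q_gt0.
have -> : ((val_nat p q (w ++ u))%:Z - (val_nat p q (w' ++ u))%:Z
          = t * (p ^ size u)%:Z * q%:Z)%R.
  by apply: (mulfI k_neq0); rewrite diff_u; ring.
exact: dvdz_mull.
Qed.

Lemma inL_rcons_transfer w w' c u a : w' != [::] ->
  size c = (size u).+1 -> inL p q (w ++ c) -> inL p q (w' ++ c) ->
  inL p q (w' ++ u) -> inL p q (rcons (w ++ u) a) -> inL p q (rcons (w' ++ u) a).
Proof.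
move=> w'_nn size_c wc_in w'c_in w'u_in wua_in; have wu_in := inL_rcons wua_in.
have eq_mod := val_nat_cat_eqmod size_c wc_in w'c_in wu_in w'u_in.
case/(inL_rconsP a wu_in): wua_in => a_lt dvd _; apply/(inL_rconsP a w'u_in); split => //.
  by move: dvd; rewrite /dvdn -modnDml -modnMmr eq_mod modnMmr modnDml.
have w'u_nn : w' ++ u != [::] by case: w' w'_nn {w'c_in w'u_in eq_mod}.
by rewrite addn_gt0 muln_gt0 p_gt0 val_nat_gt0.
Qed.

Section Factors.
Variables (B : finType) (x : nat -> B).

Local Notation T := (Tfac p q x).

Lemma Tfac_dom w k u : T w k u <> None <-> (size u <= k)%N /\ inL p q (w ++ u).
Proof. by rewrite /Tfac; case: ifP => [/andP//|/negbT/nandP[]/negbTE-> //]; split=> -[]. Qed.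

Lemma Tfac_oversize w k u : (k < size u)%N -> T w k u = None.
Proof. by rewrite /Tfac ltnNge => /negbTE->. Qed.

Lemma Tfac_rcons w a k u : T (rcons w a) k u = T w k.+1 (a :: u).
Proof. by rewrite /Tfac cat_rcons. Qed.

Lemma Tfac_trunc w k1 k2 u : (size u <= k1)%N -> (size u <= k2)%N -> T w k1 u = T w k2 u.
Proof. by rewrite /Tfac => -> ->. Qed.

Lemma Tfac_nil w k : inL p q w -> T w k [::] = Some (x (val_nat p q w)).
Proof. by rewrite /Tfac cats0 => ->. Qed.

Definition table w k : (size (words p k)).-tuple (option B) :=
  map_tuple (T w k) (in_tuple (words p k)).

Lemma tableP w w' k : table w k = table w' k <-> factor_eq (T w k) (T w' k).
Proof.
split=> [/(congr1 val)/eq_in_map eq_words u | eq_T]; last by apply: val_inj; apply: eq_map.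
have out_None w1 : u \notin words p k -> T w1 k u = None.
  move=> u_out; case E: (T w1 k u) => [b|//]; case/negP: u_out.
  have /Tfac_dom[size_u /letters_inL] : T w1 k u <> None by rewrite E.
  by rewrite all_cat => /andP[_]; apply: mem_words.
by case: (boolP (u \in words p k)) => [/eq_words //|u_out]; rewrite !out_None.
Qed.

Lemma table_head w k : inL p q w -> head None (table w k) = Some (x (val_nat p q w)).
Proof. by move=> w_in; rewrite /= -(Tfac_nil k w_in); case: k. Qed.

Lemma Finf_eventually k :
  exists N, forall n, (N < n)%N -> Finf p q x k (T (rep p q n) k).
Proof.
have [N rec] := eventually_recurrent (fun n => table (rep p q n) k).
exists N => n /rec n_rec n0; have [m n0_m /tableP eq_m] := n_rec n0.
by exists m; split => // u; rewrite eq_m.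
Qed.

Lemma Finf_trunc w k : Finf p q x k.+1 (T w k.+1) -> Finf p q x k (T w k).
Proof.
move=> rec n0; have [n [n0_n eq_n]] := rec n0; exists n; split => // u.
case: (leqP (size u) k) => [u_le|u_gt]; last by rewrite !Tfac_oversize.
by rewrite !(@Tfac_trunc _ k k.+1) ?eq_n // ltnW.
Qed.

Lemma inL_cat_transfer w w' c k u : w' != [::] -> factor_eq (T w k) (T w' k) ->
  size c = k.+1 -> inL p q (w ++ c) -> inL p q (w' ++ c) ->
  (size u <= k.+1)%N -> inL p q (w ++ u) -> inL p q (w' ++ u).
Proof.
move=> w'_nn eq_k size_c wc_in w'c_in.
have dom_k v : (size v <= k)%N -> inL p q (w ++ v) -> inL p q (w' ++ v).
  by move=> size_v wv_in; have /Tfac_dom[] : T w' k v <> None by rewrite -eq_k; apply/Tfac_dom.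
rewrite leq_eqVlt ltnS => /orP[/eqP|/dom_k//].
case/lastP: u => [//|u a]; rewrite size_rcons => -[size_u]; rewrite -!rcons_cat => wua_in.
apply: (inL_rcons_transfer w'_nn _ wc_in w'c_in) (wua_in); first by rewrite size_u.
by apply: dom_k (inL_rcons wua_in); rewrite size_u.
Qed.

Lemma radix_least_dom (U V : factor B) k r : (forall u, U u <> None <-> V u <> None) ->
  radix_least_h U k r -> radix_least_h V k r.
Proof. by move=> dom [size_r [/dom Vr r_min]]; split; [|split=> // v size_v /dom/r_min->]. Qed.

Lemma radix_least_exists w k c : size c = k -> inL p q (w ++ c) ->
  exists r, radix_least_h (T w k) k r.
Proof.
move=> size_c wc_in.
have in_words v : size v = k -> inL p q (w ++ v) -> v \in words p k.
  move=> size_v /letters_inL; rewrite all_cat => /andP[_].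
  by apply: mem_words; rewrite size_v.
set s := [seq v <- words p k | (size v == k) && inL p q (w ++ v)].
have c_in : c \in s by rewrite mem_filter size_c eqxx wc_in in_words.
have [|r] := @lexle_min s; first by apply/eqP => s_nil; rewrite s_nil in c_in.
rewrite mem_filter => /andP[/andP[/eqP size_r wr_in] _] r_min.
exists r; split => //; split; first by apply/Tfac_dom; rewrite size_r.
move=> v size_v /Tfac_dom[_ wv_in]; apply: r_min.
by rewrite mem_filter size_v eqxx wv_in in_words.
Qed.

Lemma radix_least_last w k r a : w != [::] ->
  radix_least_h (T w k.+1) k.+1 (rcons r a) -> wj0 p q (val_nat p q (w ++ r) %% q) = a.
Proof.
move=> w_nn [size_ra [/Tfac_dom[_ wra_in] ra_min]].
rewrite -rcons_cat in wra_in; have wr_in := inL_rcons wra_in.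
have wr_pos : (0 < val_nat p q (w ++ r))%N by apply: val_nat_gt0 => //; case: (w) w_nn.
have child b : ((b + p * (val_nat p q (w ++ r) %% q)) %% q == 0)
                = (q %| p * val_nat p q (w ++ r) + b).
  by rewrite /dvdn addnC -modnDml modnMmr modnDml.
case/(inL_rconsP a wr_in): wra_in => a_lt dvd_a _.
apply: head_filter_iota => //; first by rewrite child.
move=> b b_lt; rewrite child; apply/negP => dvd_b.
have wrb_in : inL p q (w ++ rcons r b).
  rewrite -rcons_cat; apply/(inL_rconsP b wr_in).
  by rewrite dvd_b (ltn_trans b_lt a_lt) addn_gt0 muln_gt0 p_gt0 wr_pos.
have : lexle (rcons r a) (rcons r b).
  have size_rb : size (rcons r b) = k.+1 by rewrite -size_ra !size_rcons.
  by apply: ra_min => //; apply/Tfac_dom; rewrite size_rb.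
by rewrite lexle_rcons leqNgt b_lt.
Qed.

Section UniqueExtension.
Variable h : nat.
Hypothesis unique_ext : forall U : factor B, Finf p q x h U ->
  forall j : nat, (j < q)%N ->
  forall U1 U2 : factor B,
    Finf_a p q x h.+1 (wj0 p q j) U1 -> extends h U U1 ->
    Finf_a p q x h.+1 (wj0 p q j) U2 -> extends h U U2 ->
    factor_eq U1 U2.

Lemma Tfac_succ_eq w w' c : w != [::] -> w' != [::] ->
  Finf p q x h.+1 (T w h.+1) -> Finf p q x h.+1 (T w' h.+1) ->
  factor_eq (T w h) (T w' h) ->
  size c = h.+1 -> inL p q (w ++ c) -> inL p q (w' ++ c) ->
  factor_eq (T w h.+1) (T w' h.+1).
Proof.
move=> w_nn w'_nn rec rec' eq_h size_c wc_in w'c_in.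
have same_dom u : T w h.+1 u <> None <-> T w' h.+1 u <> None.
  rewrite !Tfac_dom; split=> -[size_u u_in]; split => //.
    exact: inL_cat_transfer eq_h size_c wc_in w'c_in size_u u_in.
  by apply: (inL_cat_transfer w_nn _ size_c w'c_in wc_in size_u u_in) => v; rewrite eq_h.
have [ra least] := radix_least_exists size_c wc_in.
case/lastP: ra least => [|r a] least; first by case: least.
set j := val_nat p q (w ++ r) %% q.
have a_def : wj0 p q j = a := radix_least_last w_nn least.
have Finf_a_at w1 : Finf p q x h.+1 (T w1 h.+1) ->
    radix_least_h (T w1 h.+1) h.+1 (rcons r a) -> Finf_a p q x h.+1 (wj0 p q j) (T w1 h.+1).
  move=> rec1 least1; split=> //; exists (rcons r a); split=> //; split; first by case: (r).
  by rewrite last_rcons a_def.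
have extends_h w1 : extends h (T w1 h) (T w1 h.+1).
  by move=> u size_u; apply: Tfac_trunc (leqW size_u) size_u.
apply: (unique_ext (Finf_trunc rec) (ltn_pmod _ q_gt0)).
- exact: Finf_a_at rec least.
- exact: extends_h.
- exact: Finf_a_at rec' (radix_least_dom same_dom least).
- by move=> u size_u; rewrite eq_h extends_h.
Qed.

Section Automaton.
Variable N : nat.
Hypothesis recurrent : forall n, (N < n)%N -> Finf p q x h.+1 (T (rep p q n) h.+1).

Definition large w := inL p q w /\ (N < val_nat p q w)%N.

Lemma large_rep n : (N < n)%N -> large (rep p q n).
Proof. by split; rewrite ?inL_rep ?val_nat_rep. Qed.

Lemma large_neq_nil w : large w -> w != [::].
Proof. by case=> _; apply: contraTneq => ->; rewrite -[[::]]/(rep p q 0) val_nat_rep. Qed.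

Lemma large_Finf w : large w -> Finf p q x h.+1 (T w h.+1).
Proof. by case=> /inLP[n ->]; rewrite val_nat_rep; apply: recurrent. Qed.

Lemma large_rcons w a : large w -> inL p q (rcons w a) -> large (rcons w a).
Proof.
case=> w_in N_lt wa_in; split=> //.
exact: ltn_trans N_lt (val_nat_rcons_gt wa_in (leq_ltn_trans (leq0n N) N_lt)).
Qed.

Definition agree w w' : Prop := exists2 d, (d <= h)%N &
  (forall u, (size u <= d)%N -> T w h u = T w' h u) /\
  (d = h \/ forall u, size u = d.+1 -> inL p q (w ++ u) -> inL p q (w' ++ u) -> False).

Lemma agree_refl w : agree w w.
Proof. by exists h => //; split=> //; left. Qed.

Lemma agree_root w w' : inL p q w -> inL p q w' -> agree w w' ->
  x (val_nat p q w) = x (val_nat p q w').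
Proof. by move=> w_in w'_in [d _ [/(_ [::] (leq0n d))]]; rewrite !Tfac_nil // => -[]. Qed.

Lemma agree_table w w' w'' : agree w w' -> table w' h = table w'' h -> agree w w''.
Proof.
move=> [d d_le [eq_d sep]] /tableP eq_T; exists d => //.
split=> [u /eq_d->|]; first exact: eq_T.
case: sep => [->|no_ext]; first by left.
case: (eqVneq d h) => [->|d_neq]; [by left | right].
move=> u size_u wu_in w''u_in; apply: (no_ext _ size_u wu_in).
have : T w' h u <> None by rewrite eq_T; apply/Tfac_dom; rewrite size_u ltn_neqAle d_neq.
by case/Tfac_dom.
Qed.

(* While [w a] and [w' a] still have a common word at depth [h], Tfac_succ_eq
   makes their factors of height [h] equal; otherwise the depth of agreement
   drops by one. *)
Lemma agree_rcons w w' a : large w -> large w' -> agree w w' ->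
  inL p q (rcons w a) -> inL p q (rcons w' a) -> agree (rcons w a) (rcons w' a).
Proof.
move=> lw lw' [d d_le [eq_d sep]] wa_in w'a_in.
case: (pselect (d = h /\ exists2 u, size u = h &
                  inL p q (rcons w a ++ u) /\ inL p q (rcons w' a ++ u))).
  move=> [d_h [u size_u]]; rewrite !cat_rcons => -[wau_in w'au_in].
  have eq_h : factor_eq (T w h) (T w' h).
    move=> v; case: (leqP (size v) h) => [|v_gt]; last by rewrite !Tfac_oversize.
    by rewrite -{1}d_h; apply: eq_d.
  have eq_succ := Tfac_succ_eq (large_neq_nil lw) (large_neq_nil lw') (large_Finf lw)
    (large_Finf lw') eq_h (c := a :: u) (congr1 S size_u) wau_in w'au_in.
  by exists h => //; split=> [v _|]; [rewrite !Tfac_rcons eq_succ | left].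
move=> not_ext.
have no_ext u : size u = d -> inL p q (rcons w a ++ u) -> inL p q (rcons w' a ++ u) -> False.
  move=> size_u wau_in w'au_in; case: sep => [d_h|no_ext].
    by apply: not_ext; split=> //; exists u; rewrite -?d_h.
  by apply: (no_ext (a :: u)); rewrite -?cat_rcons //= size_u.
have d_gt0 : (0 < d)%N by rewrite lt0n; apply/eqP => d0; apply: (no_ext [::]); rewrite ?cats0.
exists d.-1; first exact: leq_trans (leq_pred d) d_le.
split=> [u size_u|]; last by right; rewrite prednK.
have size_au : (size (a :: u) <= d)%N by rewrite /= -(prednK d_gt0) ltnS.
have size_au_h := leq_trans size_au d_le.
by rewrite !Tfac_rcons !(@Tfac_trunc _ h.+1 h (a :: u)) ?eq_d ?leqW.
Qed.

Local Notation table_t := ((size (words p h)).-tuple (option B)).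

(* Values up to [N] are tracked exactly; beyond [N] the state is a set of
   height-[h] tables of large words that [agree] with the input word. *)
Definition state := ('I_N.+1 + {set table_t})%type.

Definition next_tables (X : {set table_t}) (a : nat) : {set table_t} :=
  [set t | `[< exists w, [/\ large w, table w h \in X, inL p q (rcons w a)
                            & table (rcons w a) h = t] >] ].

Definition step (s : state) (a : nat) : state :=
  match s with
  | inl k => let n := (p * k + a) %/ q in
             if (n <= N)%N then inl (inord n) else inr [set table (rep p q n) h]
  | inr X => inr (next_tables X a)
  end.

Definition output (s : state) : B :=
  match s with
  | inl k => x k
  | inr X => if [pick t in X] is Some t then odflt (x 0) (head None t) else x 0
  end.

Definition invariant n (s : state) : Prop :=
  if (n <= N)%N then s = inl (inord n)
  else exists2 X, s = inr X & table (rep p q n) h \in X /\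
    forall t, t \in X -> exists2 w, large w /\ table w h = t & agree (rep p q n) w.

Lemma invariant_step k a n s : rcons (rep p q k) a = rep p q n ->
  invariant k s -> invariant n (step s a).
Proof.
move=> e; have [n_gt0 qn _] := (rep_rconsP k a n).1 e.
have k_lt : (k < n)%N.
  by move: e; rewrite [rep p q n]repS // => /rcons_inj[/rep_inj-> _]; exact: ltn_parent.
have next_n : (p * k + a) %/ q = n by rewrite -qn mulKn.
rewrite /invariant; case: leqP => [k_le ->|k_gt [X -> [tk_in X_inv]]] /=.
  rewrite inordK // next_n; case: leqP => // n_gt.
  exists [set table (rep p q n) h] => //; split=> [|t /set1P->]; first exact: set11.
  by exists (rep p q n); [split=> //; apply: large_rep | apply: agree_refl].
rewrite leqNgt (ltn_trans k_gt k_lt) /=; exists (next_tables X a) => //; split.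
  rewrite inE; apply/asboolP; exists (rep p q k).
  by rewrite e inL_rep; split=> //; apply: large_rep.
move=> t; rewrite inE => /asboolP[w [lw tw_in wa_in <-]].
have [w0 [_ tw0] agree0] := X_inv _ tw_in.
exists (rcons w a); first by split=> //; apply: large_rcons.
rewrite -e; apply: agree_rcons (large_rep k_gt) lw (agree_table agree0 tw0) _ wa_in.
by rewrite e inL_rep.
Qed.

Lemma invariant_rep n : invariant n (foldl step (inl (inord 0)) (rep p q n)).
Proof.
elim/ltn_ind: n => -[_|n IH]; first by rewrite /invariant leq0n.
have rep_n := repS (ltn0Sn n); rewrite rep_n foldl_rcons.
by apply: invariant_step; [rewrite rep_n | apply/IH/ltn_parent].
Qed.

Lemma output_invariant n s : invariant n s -> output s = x n.
Proof.
rewrite /invariant; case: leqP => [n_le ->|n_gt [X -> [tn_in X_inv]]] /=.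
  by rewrite inordK.
case: pickP => [t t_in|no_pick]; last by rewrite no_pick in tn_in.
have [w [[w_in _] <-] agree_w] := X_inv t t_in.
by rewrite table_head //= -(agree_root _ w_in agree_w) ?val_nat_rep ?inL_rep.
Qed.

End Automaton.
End UniqueExtension.
End Factors.
End Numeration.

Unset Implicit Arguments.

Theorem mainTheorem12 (p q : nat) (B : finType) (x : nat -> B) :
  (1 < q)%N -> (q < p)%N -> coprime p q ->
  (exists h : nat,
     forall U : factor B, Finf p q x h U ->
     forall j : nat, (j < q)%N ->
     forall U1 U2 : factor B,
       Finf_a p q x h.+1 (wj0 p q j) U1 -> extends h U U1 ->
       Finf_a p q x h.+1 (wj0 p q j) U2 -> extends h U U2 ->
       factor_eq U1 U2) ->
  automatic p q x.
Proof.
move=> q_gt1 ltn_qp coprime_pq [h unique_ext].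
have q_gt0 : (0 < q)%N := ltnW q_gt1.
have [N recurrent] := Finf_eventually q_gt0 ltn_qp x h.+1.
exists (state p B h N), (inl (inord 0)), (@step p q B x h N), (@output p B x h N) => n.
have := invariant_rep q_gt0 ltn_qp coprime_pq unique_ext recurrent n.
by move/(output_invariant q_gt0 ltn_qp)->.
Qed.
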